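(* Let $h\ge1$, $n$ and $m_{\mathrm H}$ be fixed, let $\gamma=(m_{\mathrm H}/n)^{1/(h+1)}$, and for $i\in\mathbb{N}$ let $(\ell_i,s_i)=(i,\mathrm{round}(\gamma i)+1)$. Then $$t_{\mathrm{new}}(\ell_i,s_i)=n\Big(1-\big(\tfrac{m_{\mathrm H}}{n}\big)^{\frac{h}{h+1}}-O(\tfrac1i)\Big)\quad (i\to\infty),$$ where for positive integers $s\le\ell$, $$t_{\mathrm{new}}(\ell,s)=n\Big(1-\frac{sC_{<s}-W_{<s}}{sC_{\le\ell}}\Big)-\frac{h}{h+1}\frac{\ell}{s}m_{\mathrm H}+\frac1s\Big(\frac{1}{C_{\le\ell}}-1\Big).$$
   Context: Here $q$ is a prime power, $n=q^3$, $g=\tfrac12q(q-1)$, and $m_{\mathrm H}$ is an integer with $2(g-1)<m_{\mathrm H}<n$ (so $0<\gamma<1$); $h\ge1$ is an integer. $\mathrm{round}(x)$ denotes the nearest integer to $x$. Counting quantities (over $\mathbb{Z}_{\ge0}^h$, with $|\mathbf{i}|=\sum_\mu i_\mu$): $C_{\le\ell}=\#\{\mathbf{j}\in\mathbb{Z}_{\ge0}^h:|\mathbf{j}|\le\ell\}$, $C_{<s}=\#\{\mathbf{i}\in\mathbb{Z}_{\ge0}^h:|\mathbf{i}|<s\}$, $W_{<s}=\sum_{\mathbf{i}\in\mathbb{Z}_{\ge0}^h,|\mathbf{i}|<s}|\mathbf{i}|$. *)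

From mathcomp Require Import all_boot.
From Stdlib Require Import Reals.
Set Implicit Arguments. Unset Strict Implicit. Unset Printing Implicit Defensive.

Definition prime_power (q : nat) : Prop :=
  exists p k : nat, prime p /\ (0 < k)%N /\ q = (p ^ k)%N.

(* |i| for i : Z_{>=0}^h, with components bounded by b (bound chosen large
   enough that no tuple with the relevant constraint on |i| is excluded). *)
Definition absi (h b : nat) (f : {ffun 'I_h -> 'I_b}) : nat :=
  (\sum_(k < h) (f k : nat))%N.

(* C_{<=l} = #{ j in Z_{>=0}^h : |j| <= l }  (components automatically <= l) *)
Definition C_le (h l : nat) : nat :=
  #|[pred f : {ffun 'I_h -> 'I_l.+1} | (absi f <= l)%N]|.

(* C_{<s} = #{ i in Z_{>=0}^h : |i| < s }  (components automatically < s) *)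
Definition C_lt (h s : nat) : nat :=
  #|[pred f : {ffun 'I_h -> 'I_s} | (absi f < s)%N]|.

Definition W_lt (h s : nat) : nat :=
  (\sum_(f : {ffun 'I_h -> 'I_s} | (absi f < s)%N) absi f)%N.

(* floor and nearest-integer rounding (ties rounded up) on reals *)
Definition Rfloor (x : R) : Z := (up x - 1)%Z.
Definition round (x : R) : Z := Rfloor (x + / 2)%R.

Definition t_new (n mH h l s : nat) : R :=
  (INR n * (1 - (INR s * INR (C_lt h s) - INR (W_lt h s)) / (INR s * INR (C_le h l)))
   - (INR h / INR (h + 1)) * (INR l / INR s) * INR mH
   + / INR s * (/ INR (C_le h l) - 1))%R.

Definition gamma (n mH h : nat) : R := Rpower (INR mH / INR n) (/ INR (h + 1)).

(* s_i = round(gamma i) + 1 ; gamma i >= 0 so round is a nonnegative integer *)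
Definition s_seq (n mH h i : nat) : nat := (Z.to_nat (round (gamma n mH h * INR i)) + 1)%N.

(** The counts are binomial coefficients: stars and bars give
    [C_{<=l} = binom(l+h, h)], and [s C_{<s} - W_{<s}], the sum of [s - |i|]
    over [|i| < s], counts the [(h+1)]-tuples with entry sum [< s], so it is
    [binom(s+h, h+1)].  Hence [h! C_{<=l}] and [(h+1)! (s C_{<s} - W_{<s})] are
    falling factorials, squeezed between [(l+1)^h] and [(l+h)^h], resp. [s^(h+1)]
    and [(s+h)^(h+1)].  Along [s_i = gamma i + O(1)] this makes the fraction in
    [t_new] equal to [gamma^h/(h+1) + O(1/i)] and, since
    [m_H = n gamma^(h+1)], the middle term equal to
    [n h gamma^h/(h+1) + O(1/i)]; the last term is [O(1/i)]. *)

From mathcomp Require Import all_boot.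
From Stdlib Require Import Reals Lra Lia.
(* Not imported: Coquelicot opens [R_scope] globally, which breaks [%N] below. *)
From Coquelicot Require Hierarchy.

Set Implicit Arguments.
Unset Strict Implicit.
Unset Printing Implicit Defensive.

Lemma absi_finfun_of_tuple h b (t : h.-tuple 'I_b) :
  absi (finfun_of_tuple t) = \sum_(i <- t) i.
Proof. by rewrite /absi big_tuple; apply: eq_bigr => k _; rewrite ffunE. Qed.

Lemma sum_absi {h b : nat} (P : pred nat) (F : nat -> nat) :
  \sum_(f : {ffun 'I_h -> 'I_b} | P (absi f)) F (absi f) =
  \sum_(t : h.-tuple 'I_b | P (\sum_(i <- t) i)) F (\sum_(i <- t) i).
Proof.
rewrite (reindex (@finfun_of_tuple _ h)) /=; last first.
  by exists tuple_of_finfun => f _; [apply: finfun_of_tupleK | apply: tuple_of_finfunK].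
by apply: eq_big => [t|t _]; rewrite absi_finfun_of_tuple.
Qed.

Lemma sum_tupleS (T : finType) n (F : n.+1.-tuple T -> nat) :
  \sum_(u : n.+1.-tuple T) F u = \sum_(x : T) \sum_(t : n.-tuple T) F [tuple of x :: t].
Proof.
rewrite pair_big (reindex (fun p : T * n.-tuple T => [tuple of p.1 :: p.2])) //=.
exists (fun u => (thead u, behead_tuple u)) => [[x t] _ | u _].
  by congr pair; apply: val_inj.
by case/tupleP: u => x t; apply: val_inj.
Qed.

Lemma sum_ord_addn_leq t a : \sum_(x < t.+1 | x + a <= t) 1 = t.+1 - a.
Proof.
rewrite (eq_bigl (fun x : 'I_t.+1 => x < t.+1 - a)) => [|x]; last by rewrite ltn_subRL addnC.
by rewrite big_ord_narrow ?leq_subr // sum1_card card_ord.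
Qed.

Lemma C_le_bin h l : C_le h l = 'C(h + l, h).
Proof.
rewrite /C_le -sum1_card (eq_bigl (fun f => absi f <= l)) //.
by rewrite (sum_absi (fun k => k <= l) (fun _ => 1)) sum1dep_card card_partial_ord_partitions.
Qed.

Lemma C_le_succ h t :
  C_le h.+1 t = \sum_(f : {ffun 'I_h -> 'I_t.+1} | absi f <= t) (t.+1 - absi f).
Proof.
rewrite /C_le -sum1_card (eq_bigl (fun f => absi f <= t)) //.
rewrite (sum_absi (fun k => k <= t) (fun _ => 1)) (sum_absi (fun k => k <= t) (subn t.+1)).
rewrite big_mkcond sum_tupleS exchange_big [RHS]big_mkcond /=.
apply: eq_bigr => u _; rewrite -big_mkcond /=.
under eq_bigl => x do rewrite big_cons.
rewrite sum_ord_addn_leq.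
by case: leqP => // lt_tu; apply/eqP; rewrite subn_eq0.
Qed.

Lemma C_lt_W_lt_C_le h t : t.+1 * C_lt h t.+1 = W_lt h t.+1 + C_le h.+1 t.
Proof.
rewrite C_le_succ /W_lt /C_lt -sum1_card (eq_bigl (fun f => absi f <= t)) //.
rewrite big_distrr -big_split /=; apply: eq_bigr => f le_ft.
by rewrite muln1 subnKC // ltnW.
Qed.

Lemma leq_ffact_expn n k : n ^_ k <= expn n k.
Proof. by elim: k => // k IHk; rewrite ffactnSr expnSr leq_mul // leq_subr. Qed.

Lemma leq_expn_ffact n k : expn n.+1 k <= (n + k) ^_ k.
Proof. by elim: k => // k IHk; rewrite addnS ffactSS expnS leq_mul // ltnS leq_addr. Qed.

Lemma C_le_fact_bounds h l : expn l.+1 h <= C_le h l * h`! <= expn (l + h) h.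
Proof. by rewrite C_le_bin bin_ffact [h + l]addnC leq_expn_ffact leq_ffact_expn. Qed.

Section RateOfConvergence.
Local Open Scope R_scope.
Implicit Types (u v : nat -> R) (a b : R).

Definition cvg_O_inv (u : nat -> R) (a : R) : Prop :=
  exists C, Hierarchy.eventually (fun i => INR i * Rabs (u i - a) <= C).

Lemma eventually_INR_ge (M : R) : Hierarchy.eventually (fun i => M <= INR i).
Proof. by have [N leMN] := INR_unbounded M; exists N => i /le_INR; lra. Qed.

Lemma cvg_O_inv_eq u v a b :
  Hierarchy.eventually (fun i => u i = v i) -> a = b -> cvg_O_inv u a -> cvg_O_inv v b.
Proof.
move=> uv <- [C uC]; exists C.
by apply: Hierarchy.filter_imp (Hierarchy.filter_and _ _ uv uC) => i [<-].
Qed.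

Lemma cvg_O_inv_const a : cvg_O_inv (fun=> a) a.
Proof.
exists 0; apply: Hierarchy.filter_forall => i.
by rewrite Rminus_diag Rabs_R0 Rmult_0_r; apply: Rle_refl.
Qed.

Lemma cvg_O_inv_invn : cvg_O_inv (fun i => / INR i) 0.
Proof.
exists 1; apply: Hierarchy.filter_imp (eventually_INR_ge 1) => i i_ge1.
rewrite Rminus_0_r Rabs_pos_eq ?Rinv_r; try lra.
by apply/Rlt_le/Rinv_0_lt_compat; lra.
Qed.

Lemma cvg_O_inv_bounded u a :
  cvg_O_inv u a -> exists B, Hierarchy.eventually (fun i => Rabs (u i) <= B).
Proof.
move=> [C uC]; exists (Rabs a + C).
apply: Hierarchy.filter_imp (Hierarchy.filter_and _ _ uC (eventually_INR_ge 1)).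
move=> i [iuC i_ge1].
have := Rabs_pos (u i - a); have := Rabs_triang_inv (u i) a; nra.
Qed.

Lemma cvg_O_invD u v a b :
  cvg_O_inv u a -> cvg_O_inv v b -> cvg_O_inv (fun i => u i + v i) (a + b).
Proof.
move=> [C uC] [D vD]; exists (C + D).
apply: Hierarchy.filter_imp (Hierarchy.filter_and _ _ uC vD) => i [iuC ivD].
have := pos_INR i; have := Rabs_triang (u i - a) (v i - b).
have -> : u i - a + (v i - b) = u i + v i - (a + b) by ring.
nra.
Qed.

Lemma cvg_O_invZ c u a : cvg_O_inv u a -> cvg_O_inv (fun i => c * u i) (c * a).
Proof.
move=> [C uC]; exists (Rabs c * C).
apply: Hierarchy.filter_imp uC => i iuC.
rewrite -Rmult_minus_distr_l Rabs_mult.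
have := Rabs_pos c; nra.
Qed.

Lemma cvg_O_invM u v a b :
  cvg_O_inv u a -> cvg_O_inv v b -> cvg_O_inv (fun i => u i * v i) (a * b).
Proof.
move=> ua vb; have [B uB] := cvg_O_inv_bounded ua.
move: ua vb => [C uC] [D vD]; exists (B * D + Rabs b * C).
apply: Hierarchy.filter_imp (Hierarchy.filter_and _ _ (Hierarchy.filter_and _ _ uC vD) uB).
move=> i [[iuC ivD] ub].
have -> : u i * v i - a * b = u i * (v i - b) + b * (u i - a) by ring.
have := Rabs_triang (u i * (v i - b)) (b * (u i - a)); rewrite !Rabs_mult.
have := pos_INR i => i_ge0 triang.
have : Rabs (u i) * (INR i * Rabs (v i - b)) <= B * D.
  by apply: Rmult_le_compat => //; [apply: Rabs_pos | apply/Rmult_le_pos/Rabs_pos].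
have : Rabs b * (INR i * Rabs (u i - a)) <= Rabs b * C.
  by apply/Rmult_le_compat_l/iuC/Rabs_pos.
nra.
Qed.

Lemma cvg_O_invX k u a : cvg_O_inv u a -> cvg_O_inv (fun i => u i ^ k) (a ^ k).
Proof.
move=> ua; elim: k => [|k IHk]; first exact: cvg_O_inv_const.
exact: cvg_O_invM ua IHk.
Qed.

Lemma cvg_O_invV u a :
  a <> 0 -> cvg_O_inv u a -> cvg_O_inv (fun i => / u i) (/ a).
Proof.
move=> a_neq0 [C uC]; have a_gt0 := Rabs_pos_lt a a_neq0.
exists (2 * C / (Rabs a * Rabs a)).
have large : Hierarchy.eventually (fun i => 1 <= INR i /\ 2 * C / Rabs a <= INR i).
  by apply: Hierarchy.filter_and; apply: eventually_INR_ge.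
apply: Hierarchy.filter_imp (Hierarchy.filter_and _ _ uC large) => i [iuC [i_ge1 i_large]].
have C_ge0 : 0 <= C by have := Rabs_pos (u i - a); nra.
have ua_small : Rabs (u i - a) <= Rabs a / 2.
  have : 2 * C / Rabs a * Rabs a = 2 * C by field; lra.
  have := Rabs_pos (u i - a); nra.
have u_large : Rabs a / 2 <= Rabs (u i).
  by have := Rabs_triang_inv a (u i); rewrite Rabs_minus_sym in ua_small; lra.
have u_neq0 : u i <> 0 by move=> u0; rewrite u0 Rabs_R0 in u_large; lra.
have -> : / u i - / a = (a - u i) * / (u i * a) by field.
rewrite Rabs_mult Rabs_inv Rabs_mult Rabs_minus_sym -Rmult_assoc.
have inv_le : / (Rabs (u i) * Rabs a) <= 2 / (Rabs a * Rabs a).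
  have -> : 2 / (Rabs a * Rabs a) = / (Rabs a * (Rabs a / 2)) by field; lra.
  apply: Rinv_le_contravar; first by apply: Rmult_lt_0_compat; lra.
  nra.
have -> : 2 * C / (Rabs a * Rabs a) = C * (2 / (Rabs a * Rabs a)) by rewrite /Rdiv; ring.
apply: Rmult_le_compat => //.
- by apply/Rmult_le_pos/Rabs_pos/pos_INR.
- by apply/Rlt_le/Rinv_0_lt_compat; apply: Rmult_lt_0_compat; lra.
Qed.

Lemma cvg_O_inv_squeeze u v w a :
  Hierarchy.eventually (fun i => v i <= u i <= w i) ->
  cvg_O_inv v a -> cvg_O_inv w a -> cvg_O_inv u a.
Proof.
move=> vuw [C vC] [D wD]; exists (C + D).
apply: Hierarchy.filter_imp (Hierarchy.filter_and _ _ vuw (Hierarchy.filter_and _ _ vC wD)).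
move=> i [[vu uw] [ivC iwD]].
have : Rabs (u i - a) <= Rabs (v i - a) + Rabs (w i - a).
  by rewrite /Rabs; repeat case: Rcase_abs; lra.
have := pos_INR i; nra.
Qed.

Lemma cvg_O_inv_pow_ratio (x y : nat -> R) (c : R) k :
  cvg_O_inv (fun i => / x i) 0 ->
  Hierarchy.eventually (fun i => 0 < x i /\ x i ^ k <= y i <= (x i + c) ^ k) ->
  cvg_O_inv (fun i => y i / x i ^ k) 1.
Proof.
move=> x_inv bounds.
have base : cvg_O_inv (fun i => 1 + c * / x i) 1.
  apply: cvg_O_inv_eq (cvg_O_invD (cvg_O_inv_const 1) (cvg_O_invZ c x_inv)).
    by apply: Hierarchy.filter_forall.
  ring.
have upper := cvg_O_invX k base; rewrite pow1 in upper.
apply: cvg_O_inv_squeeze (cvg_O_inv_const 1) upper.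
apply: Hierarchy.filter_imp bounds => i [x_gt0 [lo hi]].
have xk_gt0 : 0 < x i ^ k by apply: pow_lt.
have inv_xk_ge0 : 0 <= / x i ^ k by apply/Rlt_le/Rinv_0_lt_compat.
split.
- have -> : y i / x i ^ k = 1 + (y i - x i ^ k) * / x i ^ k by field; lra.
  have : 0 <= (y i - x i ^ k) * / x i ^ k by apply: Rmult_le_pos => //; lra.
  lra.
- have -> : 1 + c * / x i = (x i + c) * / x i by field; lra.
  by rewrite Rpow_mult_distr pow_inv; apply: Rmult_le_compat_r.
Qed.

End RateOfConvergence.

Section RealFacts.
Local Open Scope R_scope.

Lemma INR_expn a k : INR (expn a k) = INR a ^ k.
Proof. by elim: k => // k IHk; rewrite expnS mult_INR IHk. Qed.

Lemma t_new_eq n mH h l s : (0 < s)%nat ->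
  t_new n mH h l s =
  INR n * (1 - INR (C_le h.+1 s.-1) / (INR s * INR (C_le h l)))
  - INR h / INR (h + 1) * (INR l / INR s) * INR mH + / INR s * (/ INR (C_le h l) - 1).
Proof.
case: s => // s _; rewrite /t_new /=.
have /(congr1 INR) := C_lt_W_lt_C_le h s; rewrite mult_INR plus_INR => sCW.
by have -> : INR s.+1 * INR (C_lt h s.+1) - INR (W_lt h s.+1) = INR (C_le h.+1 s) by lra.
Qed.

Lemma round_bounds x : x - / 2 < IZR (round x) <= x + / 2.
Proof.
by rewrite /round /Rfloor minus_IZR; have := archimed (x + / 2); lra.
Qed.

Lemma round_ge0 x : 0 <= x -> (0 <= round x)%Z.
Proof.
move=> x_ge0; suff : (-1 < round x)%Z by lia.
by apply: lt_IZR; have := round_bounds x; lra.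
Qed.

Lemma s_seq_bounds n mH h i :
  gamma n mH h * INR i + / 2 < INR (s_seq n mH h i) <= gamma n mH h * INR i + 3 / 2.
Proof.
have g_ge0 : 0 <= gamma n mH h * INR i.
  by apply: Rmult_le_pos; [apply/Rlt_le/exp_pos | apply: pos_INR].
rewrite /s_seq addn1 S_INR (INR_IZR_INZ (Z.to_nat _)) Znat.Z2Nat.id; last exact: round_ge0.
by have := round_bounds (gamma n mH h * INR i); lra.
Qed.

Lemma gamma_pow n mH h k :
  gamma n mH h ^ k = Rpower (INR mH / INR n) (INR k / INR (h + 1)).
Proof.
rewrite -Rpower_pow; last exact: exp_pos.
by rewrite /gamma Rpower_mult; congr Rpower; rewrite /Rdiv Rmult_comm.
Qed.

End RealFacts.

Section Asymptotics.
Local Open Scope R_scope.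
Variables n mH h : nat.
Hypotheses (mH_gt0 : (0 < mH)%nat) (mH_lt_n : (mH < n)%nat).

Let g := gamma n mH h.
Let s i := INR (s_seq n mH h i).

Lemma gamma_gt0 : 0 < g.
Proof. exact: exp_pos. Qed.

Let ratio_mH_n : 0 < INR mH / INR n < 1.
Proof.
have mH_pos : 0 < INR mH by apply/lt_0_INR/ltP.
have mH_lt : INR mH < INR n by apply/lt_INR/ltP.
split; first by apply: Rdiv_lt_0_compat; lra.
have -> : INR mH / INR n = 1 - (INR n - INR mH) / INR n by field; lra.
have : 0 < (INR n - INR mH) / INR n by apply: Rdiv_lt_0_compat; lra.
lra.
Qed.

Lemma gamma_pow_succ : g ^ h.+1 = INR mH / INR n.
Proof.
rewrite /g gamma_pow (_ : INR h.+1 / INR (h + 1) = 1).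
  by rewrite Rpower_1 //; case: ratio_mH_n.
by rewrite addn1 /Rdiv Rinv_r //; apply: not_0_INR.
Qed.

Lemma gamma_lt1 : g < 1.
Proof.
apply: Rnot_le_lt => g_ge1; have := pow_R1_Rle _ h.+1 g_ge1.
by rewrite gamma_pow_succ; case: ratio_mH_n; lra.
Qed.

Lemma s_seq_gt0 i : (0 < s_seq n mH h i)%nat.
Proof. by rewrite /s_seq addn1. Qed.

Lemma s_seq_le : Hierarchy.eventually (fun i => (s_seq n mH h i <= i)%nat).
Proof.
have g_lt1 := gamma_lt1.
apply: Hierarchy.filter_imp (eventually_INR_ge (3 / 2 / (1 - g))) => i i_large.
have i_gap : 3 / 2 <= INR i * (1 - g).
  have : 3 / 2 / (1 - g) * (1 - g) = 3 / 2 by field; lra.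
  nra.
apply/leP/INR_le; have := s_seq_bounds n mH h i; rewrite -/g; lra.
Qed.

Let h1_pos : 0 < INR (h + 1).
Proof. by apply/lt_0_INR/ltP; rewrite addn1. Qed.

Let s_pos i : 0 < s i.
Proof. exact/lt_0_INR/ltP/s_seq_gt0. Qed.

Let C_le_ge1 l : 1 <= INR (C_le h l).
Proof. by apply/(le_INR 1)/leP; rewrite C_le_bin bin_gt0 leq_addr. Qed.

Lemma s_seq_div_cvg : cvg_O_inv (fun i => s i / INR i) g.
Proof.
exists (3 / 2); apply: Hierarchy.filter_imp (eventually_INR_ge 1) => i i_ge1.
have -> : INR i * Rabs (s i / INR i - g) = Rabs (s i - g * INR i).
  rewrite (_ : s i - g * INR i = INR i * (s i / INR i - g)); last by field; lra.
  by rewrite Rabs_mult (Rabs_pos_eq (INR i)) //; apply: pos_INR.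
by apply: Rabs_le; have := s_seq_bounds n mH h i; rewrite -/g -/(s i); lra.
Qed.

Lemma inv_s_seq_cvg : cvg_O_inv (fun i => / s i) 0.
Proof.
have := cvg_O_invM (cvg_O_invV (Rgt_not_eq _ _ gamma_gt0) s_seq_div_cvg) cvg_O_inv_invn.
apply: cvg_O_inv_eq; last by rewrite Rmult_0_r.
apply: Hierarchy.filter_imp (eventually_INR_ge 1) => i i_ge1 /=.
by have s_gt0 := s_pos i; field; lra.
Qed.

Lemma C_le_ratio_cvg : cvg_O_inv (fun i => INR (C_le h i * h`!) / INR i ^ h) 1.
Proof.
apply: (cvg_O_inv_pow_ratio (c := INR h)) cvg_O_inv_invn _.
apply: Hierarchy.filter_imp (eventually_INR_ge 1) => i i_ge1.
have /andP [lo hi] := C_le_fact_bounds h i.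
split; first lra; split.
- apply: Rle_trans (pow_incr (INR i) (INR i.+1) h _) _; first by rewrite S_INR; lra.
  by rewrite -INR_expn; apply/le_INR/leP.
- by rewrite -plus_INR -INR_expn; apply/le_INR/leP.
Qed.

Lemma C_le_succ_ratio_cvg :
  cvg_O_inv (fun i => INR (C_le h.+1 (s_seq n mH h i).-1 * h.+1`!) / s i ^ h.+1) 1.
Proof.
apply: (cvg_O_inv_pow_ratio (c := INR h)) inv_s_seq_cvg _.
apply: Hierarchy.filter_forall => i.
have := C_le_fact_bounds h.+1 (s_seq n mH h i).-1.
rewrite addnS -addSn prednK ?s_seq_gt0 // => /andP [lo hi].
split; first exact: s_pos; split.
- by rewrite /s -INR_expn; apply/le_INR/leP.
- by rewrite /s -plus_INR -INR_expn; apply/le_INR/leP.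
Qed.

Lemma t_new_ratio_cvg :
  cvg_O_inv (fun i => INR (C_le h.+1 (s_seq n mH h i).-1) / (s i * INR (C_le h i)))
    (g ^ h / INR (h + 1)).
Proof.
have := cvg_O_invM (cvg_O_invM (cvg_O_invM C_le_succ_ratio_cvg (cvg_O_invX h s_seq_div_cvg))
  (cvg_O_invV R1_neq_R0 C_le_ratio_cvg)) (cvg_O_inv_const (/ INR (h + 1))).
apply: cvg_O_inv_eq; last by rewrite /Rdiv Rinv_1; ring.
apply: Hierarchy.filter_imp (eventually_INR_ge 1) => i i_ge1 /=.
have fact_pos : 0 < INR h`! by apply/lt_0_INR/ltP/fact_gt0.
have := s_pos i; have := C_le_ge1 i.
rewrite factS !mult_INR addn1 Rpow_mult_distr pow_inv.
move=> Q_ge1 s_gt0; field.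
have := h1_pos; rewrite addn1 => ?.
by repeat split; try apply: pow_nonzero; lra.
Qed.

Lemma t_new_correction_cvg : cvg_O_inv (fun i => / s i * (/ INR (C_le h i) - 1)) 0.
Proof.
have lower : cvg_O_inv (fun i => - / s i) 0.
  apply: cvg_O_inv_eq (cvg_O_invZ (-1) inv_s_seq_cvg); last ring.
  by apply: Hierarchy.filter_forall => i /=; ring.
apply: cvg_O_inv_squeeze lower (cvg_O_inv_const 0).
apply: Hierarchy.filter_forall => i.
have inv_s_gt0 : 0 < / s i by apply/Rinv_0_lt_compat/s_pos.
have : / INR (C_le h i) <= 1.
  by rewrite -Rinv_1; apply: Rinv_le_contravar; [lra | apply: C_le_ge1].
have : 0 < / INR (C_le h i) by apply: Rinv_0_lt_compat; have := C_le_ge1 i; lra.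
split; nra.
Qed.

Lemma t_new_cvg :
  cvg_O_inv (fun i => t_new n mH h i (s_seq n mH h i)) (INR n * (1 - g ^ h)).
Proof.
have inv_ratio := cvg_O_invV (Rgt_not_eq _ _ gamma_gt0) s_seq_div_cvg.
have := cvg_O_invD (cvg_O_invD
  (cvg_O_invZ (INR n) (cvg_O_invD (cvg_O_inv_const 1) (cvg_O_invZ (-1) t_new_ratio_cvg)))
  (cvg_O_invZ (- (INR h / INR (h + 1) * INR mH)) inv_ratio)) t_new_correction_cvg.
apply: cvg_O_inv_eq.
  apply: Hierarchy.filter_imp (eventually_INR_ge 1) => i i_ge1 /=.
  rewrite t_new_eq ?s_seq_gt0 // -/(s i).
  by have := s_pos i; have := C_le_ge1 i; have := h1_pos; move=> *; field; lra.
have n_pos : 0 < INR n by apply/lt_0_INR/ltP/(leq_ltn_trans _ mH_lt_n).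
have mH_eq : INR mH = INR n * g ^ h.+1 by rewrite gamma_pow_succ; field; lra.
rewrite mH_eq -tech_pow_Rmult addn1 S_INR.
by have := gamma_gt0; have := pos_INR h; move=> *; field; lra.
Qed.

End Asymptotics.

Theorem theorem5 (q h mH : nat) :
  prime_power q -> (1 <= h)%N ->
  (2 * ((q * (q - 1)) %/ 2 - 1) < mH)%N -> (mH < q ^ 3)%N ->
  exists (C : R) (N : nat), forall i : nat, (N <= i)%N -> (0 < i)%N ->
    (1 <= s_seq (q ^ 3) mH h i <= i)%N /\
    (Rabs (t_new (q ^ 3) mH h i (s_seq (q ^ 3) mH h i)
           - INR (q ^ 3) * (1 - Rpower (INR mH / INR (q ^ 3)) (INR h / INR (h + 1))))
     <= INR (q ^ 3) * (C / INR i))%R.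
Proof.
move=> _ _ mH_gt mH_lt; have mH_gt0 : (0 < mH)%N by apply: leq_ltn_trans mH_gt.
have n_pos : (0 < INR (q ^ 3))%R by apply/lt_0_INR/ltP/(leq_ltn_trans _ mH_lt).
have [C t_newC] := t_new_cvg h mH_gt0 mH_lt.
have [N large] : Hierarchy.eventually (fun i =>
    (INR i * Rabs (t_new (q ^ 3) mH h i (s_seq (q ^ 3) mH h i)
      - INR (q ^ 3) * (1 - gamma (q ^ 3) mH h ^ h)) <= C)%R
    /\ (s_seq (q ^ 3) mH h i <= i)%N).
  by apply: Hierarchy.filter_and => //; exact: s_seq_le mH_gt0 mH_lt.
exists (C / INR (q ^ 3))%R, N => i /leP /large [iC s_le] i_gt0.
rewrite s_seq_gt0 s_le -gamma_pow; split => //.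
have i_pos : (0 < INR i)%R by apply/lt_0_INR/ltP.
apply: (Rmult_le_reg_l (INR i)) => //.
by have -> : (INR i * (INR (q ^ 3) * (C / INR (q ^ 3) / INR i)) = C)%R by field; lra.
Qed.
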